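(* There exists a language which is accepted by a GRLOWJFA but not by any ROWJFA, and hence ROWJ ⊂ GRLOWJ (proper inclusion).
   Context: A right one-way jumping finite automaton (ROWJFA) is a tuple A = (Σ, Q, q_0, F, R) with alphabet Σ, finite state set Q, start state q_0, final states F ⊆ Q, and rules R ⊆ Q × Σ × Q such that for each p ∈ Q and a ∈ Σ there is at most one q with (p,a,q) ∈ R. For p ∈ Q let Σ_p = {b ∈ Σ : (p,b,q) ∈ R for some q}. Configurations are strings in QΣ^*; for (p,a,q) ∈ R, x ∈ (Σ \ Σ_p)^* and y ∈ Σ^*, the automaton moves from pxay to qyx. The accepted language is the set of words w with q_0 w ⇒^* q_f for some q_f ∈ F. A generalized right linear one-way jumping finite automaton (GRLOWJFA) is a tuple A = (Σ, Q, q_0, F, R) where R ⊂ Q × Σ^+ × Q is finite and for each p ∈ Q and w ∈ Σ^+ there is at most one q with (p,w,q) ∈ R (rule (p,w,q): from p, delete w, go to q). For p ∈ Q let Σ_p = {w ∈ Σ^+ : (p,w,q) ∈ R for some q}. Configurations are strings in Σ^* Q Σ^*, and the moves are: (1) for t,u,v ∈ Σ^* and (p,x,q) ∈ R, tpuxv ⇒ tuqv, provided u contains no word of Σ_p as a subword and there is no nonempty suffix u_2 of u and nonempty prefix x_1 of x with u_2x_1 = x; (2) for x ∈ Σ^+ and y ∈ Σ^* such that y contains no word of Σ_p as a subword, xpy ⇒ pxy. The accepted language is {w ∈ Σ^* : q_0 w ⇒^* q_f for some q_f ∈ F}. ROWJ and GRLOWJ denote the classes of languages accepted by ROWJFA and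 GRLOWJFA respectively. A ROWJFA is exactly a GRLOWJFA all of whose rules delete words of length 1, so ROWJ ⊆ GRLOWJ. *)

From mathcomp Require Import all_boot.
From Stdlib Require Import Relation_Operators.
Set Implicit Arguments. Unset Strict Implicit. Unset Printing Implicit Defensive.

Definition language (S : finType) := seq S -> Prop.

(* The rule set R is encoded by the partial function [rdelta]:
   (p,a,q) \in R  <->  rdelta p a = Some q   (determinism built in). *)
Record rowjfa (S : finType) := ROWJFA {
  rQ : finType;
  rq0 : rQ;
  rF : pred rQ;
  rdelta : rQ -> S -> option rQ
}.

Definition rSigma (S : finType) (A : rowjfa S) (p : rQ A) : pred S :=
  fun b => rdelta p b != None.

Definition rconfig (S : finType) (A : rowjfa S) := (rQ A * seq S)%type.

Inductive rstep (S : finType) (A : rowjfa S) : rconfig A -> rconfig A -> Prop :=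
| RStep (p q : rQ A) (a : S) (x y : seq S) :
    rdelta p a = Some q ->
    all (fun b => ~~ rSigma p b) x ->
    rstep (p, x ++ a :: y) (q, y ++ x).

Definition raccepts (S : finType) (A : rowjfa S) (w : seq S) : Prop :=
  exists2 qf : rQ A, @rF S A qf &
    clos_refl_trans _ (@rstep S A) (@rq0 S A, w) (qf, [::]).

Definition ROWJ (S : finType) (L : language S) : Prop :=
  exists A : rowjfa S, forall w, L w <-> raccepts A w.

Record grlowjfa (S : finType) := GRLOWJFA {
  gQ : finType;
  gq0 : gQ;
  gF : pred gQ;
  gR : seq (gQ * seq S * gQ);
  gR_nonempty : forall p w q, (p, w, q) \in gR -> w != [::];
  gR_det : forall p w q1 q2, (p, w, q1) \in gR -> (p, w, q2) \in gR -> q1 = q2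
}.

Definition gSigma (S : finType) (A : grlowjfa S) (p : gQ A) (w : seq S) : Prop :=
  exists q, (p, w, q) \in @gR S A.

Definition no_Sigma_subword (S : finType) (A : grlowjfa S) (p : gQ A) (u : seq S)
  : Prop := forall w, gSigma p w -> ~~ infix w u.

(* Configurations t p v in S^* Q S^*, encoded as (t, p, v). *)
Definition gconfig (S : finType) (A : grlowjfa S) := (seq S * gQ A * seq S)%type.

Inductive gstep (S : finType) (A : grlowjfa S) : gconfig A -> gconfig A -> Prop :=
| GStep1 (t u x v : seq S) (p q : gQ A) :
    (p, x, q) \in @gR S A ->
    no_Sigma_subword p u ->
    ~ (exists u2 x1, u2 != [::] /\ x1 != [::] /\ suffix u2 u /\ prefix x1 x
                      /\ u2 ++ x1 = x) ->
    gstep (t, p, u ++ x ++ v) (t ++ u, q, v)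
| GStep2 (x y : seq S) (p : gQ A) :
    x != [::] ->
    no_Sigma_subword p y ->
    gstep (x, p, y) ([::], p, x ++ y).

Definition gaccepts (S : finType) (A : grlowjfa S) (w : seq S) : Prop :=
  exists2 qf : gQ A, @gF S A qf &
    clos_refl_trans _ (@gstep S A) ([::], @gq0 S A, w) ([::], qf, [::]).

Definition GRLOWJ (S : finType) (L : language S) : Prop :=
  exists A : grlowjfa S, forall w, L w <-> gaccepts A w.

From Stdlib Require Import Relation_Operators Operators_Properties.
From mathcomp Require Import all_boot zify.
Set Implicit Arguments. Unset Strict Implicit. Unset Printing Implicit Defensive.

(* A ROWJFA is a GRLOWJFA whose rules all delete one letter: the GRLOWJFA
   configuration t p v plays the role of the ROWJFA configuration p v t, and a
   one-way jump over a prefix x of v t is a rule-(1) move when x lies in v, and a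
   rule-(2) rewind followed by a rule-(1) move otherwise.

   For the separation, the GRLOWJFA that repeatedly deletes ab, or repeatedly
   deletes abb, accepts a^i b^j (i > 0) exactly when j = i or j = 2i.  A ROWJFA
   started on a^i b^j only ever faces a block of a's and a block of b's; while
   both are nonempty its next move depends only on its state and on the front
   letter.  This control is thus eventually periodic (or stops, and then every
   long such word is rejected), and a period reading alpha a's and beta b's,
   alpha + beta > 0, makes a^i b^j and a^(i+alpha) b^(j+beta) accepted alike for
   large i, j, which cannot hold both for j = i and for j = 2i. *)

Section ClosReflTrans.
Variables (T : Type) (R : T -> T -> Prop).

Lemma clos_rt_ind_backward (P : T -> Prop) :
  (forall c d, R c d -> P d -> P c) ->
  forall c e, clos_refl_trans _ R c e -> P e -> P c.
Proof. by move=> PR c e; elim=> [x y /PR | | x y z _ IHxy _ IHyz /IHyz]. Qed.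

Lemma clos_rt_first_step c e : clos_refl_trans _ R c e ->
  c = e \/ exists2 d, R c d & clos_refl_trans _ R d e.
Proof.
move/clos_rt_rt1n_iff; case=> [|d e' Rcd /clos_rt_rt1n_iff]; first by left.
by right; exists d.
Qed.

End ClosReflTrans.

Lemma cat_eq_cat_cons (T : Type) (v t x y : seq T) (a : T) :
  v ++ t = x ++ a :: y ->
  (exists y1, v = x ++ a :: y1 /\ y = y1 ++ t) \/
  (exists x2, x = v ++ x2 /\ t = x2 ++ a :: y).
Proof.
elim: v x => [|c v IH] x; first by rewrite cat0s => ->; right; exists x.
case: x => [|d x] /=; first by case=> -> <-; left; exists v.
case=> -> /IH [[y1 [-> ->]]|[x2 [-> ->]]]; [left; exists y1 | right; exists x2]; by [].
Qed.

Lemma cat_cons_first_inj (T : Type) (P : pred T) x a y x' a' y' :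
  all (fun b => ~~ P b) x -> P a -> all (fun b => ~~ P b) x' -> P a' ->
  x ++ a :: y = x' ++ a' :: y' -> [/\ x = x', a = a' & y = y'].
Proof.
elim: x x' => [|c x IH] [|d x'] /=.
- by move=> _ _ _ _ [-> ->].
- by move=> _ Pa /andP[Pd _] _ [Eda _]; rewrite -Eda Pa in Pd.
- by move=> /andP[Pc _] _ _ Pa' [Eca _]; rewrite Eca Pa' in Pc.
by move=> /andP[_ Hx] Pa /andP[_ Hx'] Pa' [-> /(IH x' Hx Pa Hx' Pa')[-> -> ->]].
Qed.

Lemma pigeonhole_nat (T : finType) (f : nat -> T) :
  exists n1 n2, [/\ n1 < n2, n2 <= #|T| & f n1 = f n2].
Proof.
have /injectivePn[i [j neq_ij eq_fij]] : ~~ injectiveb (fun i : 'I_#|T|.+1 => f i).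
  by apply/injectiveP => /leq_card; rewrite card_ord ltnn.
have le_T (k : 'I_#|T|.+1) : k <= #|T| by rewrite -ltnS.
case: (ltngtP i j) => [lt_ij | lt_ji | /val_inj eq_ij].
- by exists i, j.
- by exists j, i.
- by rewrite eq_ij eqxx in neq_ij.
Qed.

Definition overlap (T : eqType) (u x : seq T) : Prop :=
  exists u2 x1, u2 != [::] /\ x1 != [::] /\ suffix u2 u /\ prefix x1 x /\ u2 ++ x1 = x.

Lemma not_overlap_cons (T : eqType) (u x : seq T) (c : T) :
  c \notin x -> ~ overlap u (c :: x).
Proof.
move=> cx [[|d u2] [[|e x1] [//= _ [//= _ [_ []]]]]].
by move=> /andP[/eqP -> _] [_ Ex]; rewrite -Ex mem_cat mem_head orbT in cx.
Qed.

Section RowjfaRuns.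
Variables (S : finType) (A : rowjfa S).
Implicit Types (p q : rQ A) (w : seq S) (c d : rconfig A).

Definition raccepts_from c : Prop :=
  exists2 qf, rF qf & clos_refl_trans _ (@rstep S A) c (qf, [::]).

Lemma rstepP p q w w' :
  rstep (p, w) (q, w') <->
  exists x a y, [/\ w = x ++ a :: y, rdelta p a = Some q,
                    all (fun b => ~~ rSigma p b) x & w' = y ++ x].
Proof.
split=> [H | [x [a [y [-> Hd Hx ->]]]]]; last exact: RStep.
by inversion H; exists x, a, y.
Qed.

Lemma rstep_det c d1 d2 : rstep c d1 -> rstep c d2 -> d1 = d2.
Proof.
case: c d1 d2 => p w [q1 w1] [q2 w2] /rstepP[x1 [a1 [y1 [-> Hd1 Hx1 ->]]]].
case/rstepP=> x2 [a2 [y2 [E Hd2 Hx2 ->]]].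
have Sa1 : rSigma p a1 by rewrite /rSigma Hd1.
have Sa2 : rSigma p a2 by rewrite /rSigma Hd2.
have [<- Ea <-] := cat_cons_first_inj Hx1 Sa1 Hx2 Sa2 E.
by move: Hd1; rewrite Ea Hd2 => -[->].
Qed.

Lemma raccepts_from_rt c d :
  clos_refl_trans _ (@rstep S A) c d -> raccepts_from d -> raccepts_from c.
Proof. by move=> Hcd [qf Hf Hd]; exists qf => //; apply: rt_trans Hd. Qed.

Lemma raccepts_from_rstep c d : rstep c d -> raccepts_from c <-> raccepts_from d.
Proof.
move=> Hcd; split=> [|Hd]; last exact: raccepts_from_rt (rt_step _ _ _ _ Hcd) Hd.
case=> qf Hf Hrun; case: (clos_rt_first_step Hrun) => [Ec | [d' Hcd' Hd']].
  by move: Hcd; rewrite Ec; case: d => q w /rstepP[[|? ?] [? [? []]]].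
by exists qf; rewrite // (rstep_det Hcd Hcd').
Qed.

Lemma raccepts_from_dead p w :
  (forall a, rdelta p a = None) -> w != [::] -> ~ raccepts_from (p, w).
Proof.
move=> Hp Hw [qf _ Hrun].
case: (clos_rt_first_step Hrun) => [[_ Ew] | [[q w'] /rstepP[x [a [y [_ Hd _ _]]]] _]].
  by rewrite Ew in Hw.
by rewrite Hp in Hd.
Qed.

Lemma rstep_rotate p x y d :
  all (fun b => ~~ rSigma p b) y -> rstep (p, x ++ y) d -> rstep (p, y ++ x) d.
Proof.
case: d => q w Hy /rstepP[x1 [a [y1 [E Hd Hx1 ->]]]].
case: (cat_eq_cat_cons E) => [[y2 [-> ->]] | [x2 [_ Ey]]].
  apply/rstepP; exists (y ++ x1), a, y2.
  by rewrite all_cat Hy Hx1 -!catA.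
by move: Hy; rewrite Ey all_cat /= /rSigma Hd andbF.
Qed.

Lemma rstep_head p q a y : rdelta p a = Some q -> rstep (p, a :: y) (q, y).
Proof. by move=> Hd; apply/rstepP; exists [::], a, y; rewrite cats0. Qed.

Lemma rstep_jump p q a b n y : rdelta p b = None -> rdelta p a = Some q ->
  rstep (p, nseq n b ++ a :: y) (q, y ++ nseq n b).
Proof.
by move=> Hb Ha; apply/rstepP; exists (nseq n b), a, y; rewrite all_nseq /rSigma Hb orbT.
Qed.

End RowjfaRuns.

Definition gaccepts_from (S : finType) (A : grlowjfa S) (c : gconfig A) : Prop :=
  exists2 qf, gF qf & clos_refl_trans _ (@gstep S A) c ([::], qf, [::]).

Section LetterRules.
Variables (S : finType) (A : rowjfa S).

Definition letter_rules : seq (rQ A * seq S * rQ A) :=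
  [seq (r.1.1, [:: r.1.2], r.2) | r <- enum {: rQ A * S * rQ A}
     & rdelta r.1.1 r.1.2 == Some r.2].

Lemma mem_letter_rules p w q :
  (p, w, q) \in letter_rules <-> exists2 a, w = [:: a] & rdelta p a = Some q.
Proof.
split=> [/mapP[[[p' a] q']] | [a -> Hd]].
  by rewrite mem_filter /= => /andP[/eqP Hd _] [-> -> ->]; exists a.
by apply/mapP; exists (p, a, q); rewrite // mem_filter /= Hd eqxx mem_enum.
Qed.

Lemma letter_rules_nonempty p w q : (p, w, q) \in letter_rules -> w != [::].
Proof. by case/mem_letter_rules=> a ->. Qed.

Lemma letter_rules_det p w q1 q2 :
  (p, w, q1) \in letter_rules -> (p, w, q2) \in letter_rules -> q1 = q2.
Proof.
case/mem_letter_rules=> a -> Hd1 /mem_letter_rules[b [<-]].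
by rewrite Hd1 => -[].
Qed.

Definition grlowjfa_of_rowjfa : grlowjfa S :=
  GRLOWJFA (rq0 A) (@rF S A) letter_rules_nonempty letter_rules_det.

Local Notation B := grlowjfa_of_rowjfa.

Lemma no_Sigma_subword_letters p u :
  no_Sigma_subword (A := B) p u <-> all (fun b => ~~ rSigma p b) u.
Proof.
split=> [noSig | /allP noSig w [q /mem_letter_rules[a -> Hd]]].
  apply/allP=> b bu; apply/negP; rewrite /rSigma.
  case Hd: (rdelta p b) => [q|] // _.
  have /noSig/negP : gSigma (A := B) p [:: b] by exists q; apply/mem_letter_rules; exists b.
  by apply; apply/infixP; case/splitPr: bu => u1 u2; exists u1, u2.
apply/negP=> /infixP[u1 [u2 Eu]].
have /noSig : a \in u by rewrite Eu mem_cat mem_head orbT.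
by rewrite /rSigma Hd.
Qed.

Lemma rstep_gsteps p q v t w : rstep (p, v ++ t) (q, w) ->
  exists t' v', w = v' ++ t' /\ clos_refl_trans _ (@gstep S B) (t, p, v) (t', q, v').
Proof.
case/rstepP=> x [a [y [E Hd Hx ->]]].
have rule : (p, [:: a], q) \in letter_rules by apply/mem_letter_rules; exists a.
have no_ov u : ~ overlap u [:: a] by apply: not_overlap_cons.
case: (cat_eq_cat_cons E) => [[y1 [-> ->]] | [x2 [Ex ->]]].
  exists (t ++ x), y1; split; first by rewrite catA.
  apply: rt_step; apply: (@GStep1 _ B t x _ y1 _ _ rule _ (no_ov x)).
  exact/no_Sigma_subword_letters.
(* The letter read lies in [t]: rewind with rule (2) first. *)
subst x; move: Hx; rewrite all_cat => /andP[Hv Hx2].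
exists x2, (y ++ v); split; first by rewrite catA.
apply: (rt_trans _ _ _ ([::], p, (x2 ++ a :: y) ++ v)).
  by apply/rt_step/GStep2; [case: (x2) | apply/no_Sigma_subword_letters].
rewrite -catA; apply: rt_step.
apply: (@GStep1 _ B [::] x2 _ (y ++ v) _ _ rule _ (no_ov x2)).
exact/no_Sigma_subword_letters.
Qed.

Lemma gstep_raccepts_from (c d : gconfig B) : gstep c d ->
  raccepts_from (A := A) (d.1.2, d.2 ++ d.1.1) ->
  raccepts_from (A := A) (c.1.2, c.2 ++ c.1.1).
Proof.
case=> [t u x v p q /mem_letter_rules[a -> Hd] /no_Sigma_subword_letters Hu _
       | x y p Hx /no_Sigma_subword_letters Hy] /=.
  apply: raccepts_from_rt; apply: rt_step.
  by move: (@RStep _ _ p q a u (v ++ t) Hd Hu); rewrite -!catA.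
rewrite cats0 => -[qf Hf Hrun].
case: (clos_rt_first_step Hrun) => [[_ Exy] | [e He He_run]].
  by case: (x) Hx Exy.
by exists qf => //; apply: rt_trans He_run; apply/rt_step/rstep_rotate.
Qed.

Lemma raccepts_from_gaccepts_from p v t :
  raccepts_from (p, v ++ t) -> gaccepts_from (A := B) (t, p, v).
Proof.
case=> qf Hf Hrun.
pose P (c : rconfig A) := forall t v, c.2 = v ++ t -> gaccepts_from (A := B) (t, c.1, v).
suff : P (p, v ++ t) by apply.
apply: (clos_rt_ind_backward (P := P) _ Hrun)
  => [[p1 w1] [q w2] Hs Pd t1 v1 /= Ew1 | t1 v1 /=].
  move: Hs; rewrite Ew1 => /rstep_gsteps[t' [v' [/Pd[qf' Hf' Hrun'] Hsteps]]].
  by exists qf'; last apply: rt_trans Hrun'.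
by case: v1 => [|//]; case: t1 => [|//] _; exists qf; last apply: rt_refl.
Qed.

Lemma gaccepts_from_raccepts_from (c : gconfig B) :
  gaccepts_from c -> raccepts_from (A := A) (c.1.2, c.2 ++ c.1.1).
Proof.
case=> qf Hf Hrun; apply: (clos_rt_ind_backward gstep_raccepts_from Hrun).
by exists qf => //; apply: rt_refl.
Qed.

Lemma raccepts_gaccepts w : raccepts A w <-> gaccepts B w.
Proof.
split=> [Hw | /gaccepts_from_raccepts_from]; last by rewrite /= cats0.
by apply: raccepts_from_gaccepts_from; rewrite cats0.
Qed.

End LetterRules.

Lemma ROWJ_GRLOWJ (S : finType) (L : language S) : ROWJ L -> GRLOWJ L.
Proof.
case=> A HA; exists (grlowjfa_of_rowjfa A) => w.
exact: iff_trans (HA w) (raccepts_gaccepts A w).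
Qed.

(* The letter a is [true] and b is [false]; in state [Some l] the automaton
   deletes [ratio l] b's per a. *)
Definition ratio (l : bool) : nat := if l then 1 else 2.

Definition a_bs (m : nat) : seq bool := true :: nseq m false.

Definition ab_abb_rules : seq (option bool * seq bool * option bool) :=
  [:: (None, a_bs 1, Some true); (Some true, a_bs 1, Some true);
      (None, a_bs 2, Some false); (Some false, a_bs 2, Some false)].

Lemma mem_ab_abb_rules p x q : (p, x, q) \in ab_abb_rules ->
  exists2 l, q = Some l & x = a_bs (ratio l) /\ (p = None \/ p = q).
Proof.
rewrite !inE => /or4P[] /eqP[-> -> ->];
  by [exists true; auto | exists true; auto | exists false; auto | exists false; auto].
Qed.

Lemma ab_abb_rules_nonempty p x q : (p, x, q) \in ab_abb_rules -> x != [::].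
Proof. by case/mem_ab_abb_rules=> l _ [-> _]. Qed.

Lemma ab_abb_rules_det p x q1 q2 :
  (p, x, q1) \in ab_abb_rules -> (p, x, q2) \in ab_abb_rules -> q1 = q2.
Proof.
case/mem_ab_abb_rules=> l1 -> [-> _] /mem_ab_abb_rules[l2 -> [/(congr1 size) /= + _]].
by rewrite !size_nseq; case: l1; case: l2.
Qed.

Definition ab_abb : grlowjfa bool :=
  GRLOWJFA (None : option bool) (fun q => q != None)
    ab_abb_rules_nonempty ab_abb_rules_det.

Definition ab_word i j : seq bool := nseq i true ++ nseq j false.

Lemma no_Sigma_subword_nseq p n l : no_Sigma_subword (A := ab_abb) p (nseq n l).
Proof.
move=> w [q /mem_ab_abb_rules[l' _ [-> _]]]; apply/negP=> /mem_infix sub.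
have /sub : true \in a_bs (ratio l') by exact: mem_head.
have /sub : false \in a_bs (ratio l') by case: (l').
by rewrite !mem_nseq => /andP[_ /eqP <-] /andP[_ /eqP].
Qed.

Lemma ab_abb_move p q m n k : (p, a_bs m, q) \in ab_abb_rules ->
  clos_refl_trans _ (@gstep _ ab_abb) ([::], p, ab_word n.+1 (m + k)) ([::], q, ab_word n k).
Proof.
move=> rule.
have -> : ab_word n.+1 (m + k) = nseq n true ++ a_bs m ++ nseq k false.
  by rewrite /ab_word -addn1 !nseqD -!catA.
apply: (rt_trans _ _ _ (nseq n true, q, nseq k false)).
  apply/rt_step/(@GStep1 _ ab_abb [::]) => //; first exact: no_Sigma_subword_nseq.
  by apply: not_overlap_cons; rewrite mem_nseq andbF.
case: n => [|n]; first exact: rt_refl.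
by apply/rt_step/GStep2 => //; apply: no_Sigma_subword_nseq.
Qed.

Lemma ab_abb_loop l n :
  clos_refl_trans _ (@gstep _ ab_abb)
    ([::], Some l, ab_word n (n * ratio l)) ([::], Some l, [::]).
Proof.
elim: n => [|n IH]; first exact: rt_refl.
by apply: rt_trans IH; rewrite mulSn; apply: ab_abb_move; case: l.
Qed.

Lemma gaccepts_ab_abb_word l n : gaccepts ab_abb (ab_word n.+1 (n.+1 * ratio l)).
Proof.
exists (Some l) => //; apply: rt_trans (ab_abb_loop l n).
by rewrite mulSn; apply: ab_abb_move; case: l.
Qed.

Definition ab_abb_inv (p : option bool) (w : seq bool) : Prop :=
  let in_ratio l := count_mem false w = count_mem true w * ratio l in
  if p is Some l then in_ratio l else in_ratio true \/ in_ratio false.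

Lemma gstep_ab_abb_inv (c d : gconfig ab_abb) : gstep c d ->
  ab_abb_inv d.1.2 (d.1.1 ++ d.2) -> ab_abb_inv c.1.2 (c.1.1 ++ c.2).
Proof.
case=> [t u x v p q /mem_ab_abb_rules[l -> [-> [-> | ->]]] _ _ | //] /=;
  by rewrite -cat1s !count_cat !count_nseq /=; case: l => /=; lia.
Qed.

Lemma gaccepts_ab_abb_inv w : gaccepts ab_abb w -> ab_abb_inv None w.
Proof.
case=> qf Hf Hrun.
apply: (clos_rt_ind_backward (P := fun c => ab_abb_inv c.1.2 (c.1.1 ++ c.2))
          gstep_ab_abb_inv Hrun).
by case: (qf) Hf => [[]|].
Qed.

Lemma gaccepts_ab_word i j : 0 < i ->
  gaccepts ab_abb (ab_word i j) <-> j = i \/ j = i * 2.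
Proof.
case: i => // n _; split.
  by move/gaccepts_ab_abb_inv; rewrite /ab_abb_inv !count_cat !count_nseq /=; lia.
case=> ->; last exact: gaccepts_ab_abb_word false n.
by have := gaccepts_ab_abb_word true n; rewrite /= muln1.
Qed.

Section BlockRuns.
Variable A : rowjfa bool.

(* A ROWJFA configuration reachable from a^i b^j: a block of i a's and a block
   of j b's, [l] being the letter of the front block. *)
Definition block_word (l : bool) i j : seq bool :=
  if l then ab_word i j else nseq j false ++ nseq i true.

Lemma size_block_word l i j : size (block_word l i j) = i + j.
Proof. by case: l; rewrite size_cat !size_nseq // addnC. Qed.

(* With both blocks nonempty, the automaton reads the front letter if it can
   and otherwise jumps over the front block. *)
Definition block_move (s : rQ A * bool) : option (rQ A * bool) :=
  let: (p, l) := s in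
  if rdelta p l is Some q then Some (q, l)
  else if rdelta p (~~ l) is Some q then Some (q, ~~ l) else None.

Lemma rstep_block p l q c i j : 0 < i -> 0 < j -> block_move (p, l) = Some (q, c) ->
  rstep (p, block_word l i j) (q, block_word c (i - c) (j - ~~ c)).
Proof.
case: i j => [|i] [|j] // _ _ /=.
case El: (rdelta p l) => [q'|].
  by case=> <- <-; case: l El => /= El; rewrite ?subn0 ?subn1; apply: rstep_head.
case Enl: (rdelta p (~~ l)) => [q'|] // [<- <-].
case: l El Enl => /= El Enl; rewrite /ab_word !subn1 /=.
  exact: (@rstep_jump _ _ p q' false true i.+1 (nseq j false)).
exact: (@rstep_jump _ _ p q' true false j.+1 (nseq i true)).
Qed.

Lemma block_move_dead s : block_move s = None -> forall a, rdelta s.1 a = None.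
Proof.
case: s => p l /=; case El: (rdelta p l) => //; case Enl: (rdelta p (~~ l)) => // _ a.
by case: a l El Enl => -[].
Qed.

(* The control after [k] block moves, with the numbers of a's and b's read. *)
Fixpoint trace k : (rQ A * bool) * (nat * nat) :=
  if k is k'.+1 then
    let t := trace k' in
    if block_move t.1 is Some s then (s, (t.2.1 + s.2, t.2.2 + ~~ s.2)) else t
  else (rq0 A, true, (0, 0)).

Definition trace_config k i j : rconfig A :=
  let t := trace k in (t.1.1, block_word t.1.2 (i - t.2.1) (j - t.2.2)).

Lemma trace_read k : (trace k).2.1 + (trace k).2.2 <= k.
Proof. by elim: k => //= k; case: (block_move _) => [[q []]|] /=; lia. Qed.

Lemma trace_read_mono k d :
  (trace k).2.1 <= (trace (k + d)).2.1 /\ (trace k).2.2 <= (trace (k + d)).2.2.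
Proof.
by elim: d => [|d]; rewrite ?addn0 ?addnS //=; case: (block_move _) => [[q []]|] /=; lia.
Qed.

Lemma raccepts_from_trace k i j : k < i -> k < j ->
  raccepts_from (rq0 A, ab_word i j) <-> raccepts_from (trace_config k i j).
Proof.
elim: k => [|k IH] lt_ki lt_kj; first by rewrite /trace_config /= !subn0.
apply: (iff_trans (IH (ltnW lt_ki) (ltnW lt_kj))).
have := trace_read k; rewrite /trace_config /=.
case E: (block_move (trace k).1) => [[q c]|] //=.
case: (trace k) E => [[p l] [a b]] /= E read_k.
rewrite !subnDA; apply: raccepts_from_rstep; apply: rstep_block E; lia.
Qed.

Lemma raccepts_from_trace_shift n1 n2 i j :
  n1 <= n2 -> (trace n1).1 = (trace n2).1 -> n2 < i -> n2 < j ->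
  raccepts_from (rq0 A, ab_word (i + ((trace n2).2.1 - (trace n1).2.1))
                                (j + ((trace n2).2.2 - (trace n1).2.2)))
  <-> raccepts_from (rq0 A, ab_word i j).
Proof.
move=> le12 Ectrl lt2i lt2j.
have [mono_a mono_b] := trace_read_mono n1 (n2 - n1).
rewrite subnKC // in mono_a mono_b.
have := trace_read n1; have := trace_read n2.
rewrite (raccepts_from_trace (k := n2)); try lia.
rewrite (raccepts_from_trace (k := n1)); try lia.
rewrite /trace_config Ectrl; move: mono_a mono_b.
case: (trace n1).2 => a1 b1; case: (trace n2).2 => a2 b2 /= mono_a mono_b read2 read1.
have -> : i + (a2 - a1) - a2 = i - a1 by lia.
by have -> : j + (b2 - b1) - b2 = j - b1 by lia.
Qed.

End BlockRuns.

Lemma ab_abb_not_ROWJ : ~ ROWJ (gaccepts ab_abb).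
Proof.
case=> A HA.
have acc i j : 0 < i -> raccepts_from (rq0 A, ab_word i j) <-> j = i \/ j = i * 2.
  by move=> i_gt0; apply: iff_trans (iff_sym (HA _)) (gaccepts_ab_word j i_gt0).
have [n1 [n2 [lt12 _ Ectrl]]] := pigeonhole_nat (fun k => (trace A k).1).
case Emove: (block_move (trace A n1).1) => [s|]; last first.
  have := (acc n1.+1 n1.+1 isT).2 (or_introl erefl).
  move/(raccepts_from_trace A (ltnSn n1) (ltnSn n1)).
  apply: raccepts_from_dead (block_move_dead Emove) _.
  by rewrite -size_eq0 size_block_word; have := trace_read A n1; lia.
have [read_a read_b] := trace_read_mono A n1.+1 (n2 - n1.+1).
rewrite subnKC //= Emove /= in read_a read_b.
have shift := raccepts_from_trace_shift (ltnW lt12) Ectrl.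
pose M := (n2 + (trace A n2).2.1 + (trace A n2).2.2).+1.
have lt2M : n2 < M by rewrite ltnS -addnA leq_addr.
have /(shift _ _ lt2M lt2M)/acc eq1 := (acc M M isT).2 (or_introl erefl).
have /(shift _ _ lt2M)/acc eq2 := (acc M (M * 2) isT).2 (or_intror erefl).
by move: eq1 eq2 read_a read_b; rewrite /M; case: s.2 => /=; lia.
Qed.

Theorem lemma1 :
  (forall (S : finType) (L : language S), ROWJ L -> GRLOWJ L) /\
  (exists (S : finType) (L : language S), GRLOWJ L /\ ~ ROWJ L).
Proof.
split; first exact: ROWJ_GRLOWJ.
exists bool, (gaccepts ab_abb); split; last exact: ab_abb_not_ROWJ.
by exists ab_abb.
Qed.
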